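(* Let $G^0,G^1,G^2$ be finite-dimensional complex vector spaces with $\dim G^0>\dim G^1\ge 1$. For a subspace $E\subset\mathrm{Hom}(G^0,G^1)$, define $$\phi_E:E\times\mathrm{Hom}(G^1,G^2)\to\mathrm{Hom}(G^0,G^2),\qquad(\alpha,\beta)\mapsto\beta\circ\alpha.$$ (i) If $\dim G^1=1$, then for every integer $k$ with $2\le k\le\dim\mathrm{Hom}(G^0,G^1)$ and every $E$ in a nonempty Zariski open subset of $G(k,\mathrm{Hom}(G^0,G^1))$, we have $\mathrm{Symm}(\phi_E)=\{0\}$. (ii) If $\dim G^1>1$, then for every integer $k$ with $3\le k\le\dim\mathrm{Hom}(G^0,G^1)$ and every $E$ in a nonempty Zariski open subset of $G(k,\mathrm{Hom}(G^0,G^1))$, we have $\mathrm{Symm}(\phi_E)=\{0\}$.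
   Context: For a bilinear map $B:E\times F\to G$, define $$\mathrm{Symm}(B)=\{q\in\mathrm{Hom}(E,F): B(\alpha,q(\alpha'))=B(\alpha',q(\alpha))\ \forall\alpha,\alpha'\in E\}.$$ Thus $\mathrm{Symm}(\phi_E)$ is the set of $q\in\mathrm{Hom}(E,\mathrm{Hom}(G^1,G^2))$ with $q(\alpha')\circ\alpha=q(\alpha)\circ\alpha'$ for all $\alpha,\alpha'\in E$. *)

From mathcomp Require Import all_boot all_algebra.
From mathcomp Require Import Rstruct.
From mathcomp Require Export complex.
Set Implicit Arguments. Unset Strict Implicit. Unset Printing Implicit Defensive.
Import GRing.Theory Num.Theory.
Local Open Scope ring_scope.

Definition CC : fieldType := complex Rdefinitions.R.

(* G^0 = CC^n0, G^1 = CC^n1, G^2 = CC^n2 (row vectors).  A linear map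
   G^a -> G^b is a matrix 'M[CC]_(na, nb) acting on row vectors on the right,
   so  beta \o alpha  is  alpha *m beta. *)

Definition Symm_phi (n0 n1 n2 : nat) (E : {vspace 'M[CC]_(n0, n1)})
    (q : 'Hom(subvs_of E, 'M[CC]_(n1, n2))) : Prop :=
  forall a a' : subvs_of E, vsval a *m q a' = vsval a' *m q a.

Definition stiefel (n0 n1 k : nat) (b : k.-tuple 'M[CC]_(n0, n1)) :
    'M[CC]_(k, n0 * n1) :=
  \matrix_(i < k) mxvec (tnth b i).

(* These are, up to sign and repetition/zeros, the usual
   Pluecker coordinates (linear injective image of the standard Pluecker vector). *)
Definition pluecker (n0 n1 k : nat) (b : k.-tuple 'M[CC]_(n0, n1)) :
    {ffun {ffun 'I_k -> 'I_(n0 * n1)} -> CC} :=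
  [ffun f : {ffun 'I_k -> 'I_(n0 * n1)} => \det (colsub (fun i => f i) (stiefel b))].

(* A homogeneous polynomial of degree d in variables indexed by a finite type I
   is given by coefficients on exponent vectors m : I -> {0..d}; only monomials
   of total degree d are used. *)
Definition hpoly_eval (I : finType) (d : nat) (c : {ffun {ffun I -> 'I_d.+1} -> CC})
    (x : I -> CC) : CC :=
  \sum_(m : {ffun I -> 'I_d.+1} | (\sum_i (m i : nat))%N == d)
     c m * \prod_i x i ^+ m i.

(* U is a Zariski open subset of G(k, Hom(G0,G1)) (k-dimensional subspaces),
   the Grassmannian carrying the Zariski topology induced by the Pluecker
   embedding: U is the complement in G(k,.) of the common zero locus of a family
   of homogeneous polynomials in the Pluecker coordinates.  (Nonvanishing of a
   homogeneous polynomial at the Pluecker vector does not depend on the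
   chosen basis.) *)
Definition zariski_open_Gr (n0 n1 k : nat) (U : {vspace 'M[CC]_(n0, n1)} -> Prop) : Prop :=
  (forall E, U E -> \dim E = k) /\
  exists (J : Type) (d : J -> nat)
         (c : forall j : J, {ffun {ffun {ffun 'I_k -> 'I_(n0 * n1)} -> 'I_(d j).+1} -> CC}),
    forall E : {vspace 'M[CC]_(n0, n1)}, \dim E = k ->
      (U E <-> exists j : J, exists b : k.-tuple 'M[CC]_(n0, n1),
                  basis_of E b /\ hpoly_eval (c j) (pluecker b) != 0).

From mathcomp Require Import all_boot all_algebra.
From mathcomp Require Import Rstruct.
From Stdlib Require Import FunctionalExtensionality.
Import GRing.Theory Num.Theory.
Local Open Scope ring_scope.
Set Implicit Arguments. Unset Strict Implicit.

(* If some A in E has an invertible block A_u of m rows (m = dim G^1), symmetry of q gives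
   A_u q(B) = B_u q(A) for every B in E, so q is determined by q(A).  One more symmetry
   relation, A q(B) = B q(A) when m = 1, or B q(C) = C q(B) in general, then reads
   K q(A) = 0 for an explicit matrix K; if K has an invertible m x m row block, q(A) = 0
   and hence q = 0.  The product of these two block determinants is a polynomial
   certificate in A, B (and C).  Elements of E = span b are obtained linearly from the
   Pluecker coordinates of b by Cramer's rule, so the certificate becomes a homogeneous
   polynomial in the Pluecker coordinates of E.  It does not vanish on a subspace containing
   explicit witness matrices, hence it cuts out a nonempty Zariski open set. *)

Section HomogeneousPolynomials.

Variable I : finType.
Implicit Types (d e : nat) (F G : (I -> CC) -> CC).

Definition is_hpoly d F :=
  exists c : {ffun {ffun I -> 'I_d.+1} -> CC}, forall x, F x = hpoly_eval c x.

Lemma is_hpoly_ext d F G : F =1 G -> is_hpoly d F -> is_hpoly d G.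
Proof. by move=> FG [c Fc]; exists c => x; rewrite -FG. Qed.

Lemma is_hpoly0 d : is_hpoly d (fun => 0).
Proof. by exists 0 => x; rewrite /hpoly_eval big1 // => m _; rewrite ffunE mul0r. Qed.

Lemma is_hpolyD d F G :
  is_hpoly d F -> is_hpoly d G -> is_hpoly d (fun x => F x + G x).
Proof.
move=> [c Fc] [c' Gc']; exists (c + c') => x.
rewrite Fc Gc' /hpoly_eval -big_split; apply: eq_bigr => m _.
by rewrite ffunE mulrDl.
Qed.

Lemma is_hpolyZ d a F : is_hpoly d F -> is_hpoly d (fun x => a * F x).
Proof.
move=> [c Fc]; exists (a *: c) => x.
rewrite Fc /hpoly_eval big_distrr /=; apply: eq_bigr => m _.
by rewrite ffunE mulrA.
Qed.

Lemma is_hpolyB d F G :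
  is_hpoly d F -> is_hpoly d G -> is_hpoly d (fun x => F x - G x).
Proof.
move=> hF /(is_hpolyZ (-1)) hG.
by apply: is_hpoly_ext (is_hpolyD hF hG) => x; rewrite mulN1r.
Qed.

Lemma is_hpoly_cst a : is_hpoly 0 (fun => a).
Proof.
have m0P (m : {ffun I -> 'I_1}) : m = [ffun => ord0].
  by apply/ffunP => i; rewrite ffunE; apply/val_inj; case: (m i) => -[].
exists [ffun => a] => x; rewrite /hpoly_eval (big_pred1 [ffun => ord0]).
  by rewrite ffunE big1 ?mulr1 // => i _; rewrite ffunE expr0.
by move=> m; rewrite /= [m]m0P eqxx; apply/eqP/big1 => i _; rewrite ffunE.
Qed.

Lemma is_hpoly_coord i : is_hpoly 1 (fun x => x i).
Proof.
pose ei : {ffun I -> 'I_2} := [ffun j => if j == i then ord_max else ord0].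
have eiE j : (ei j : nat) = (j == i) by rewrite ffunE; case: (j == i).
exists [ffun m => (m == ei)%:R] => x; rewrite /hpoly_eval (bigD1 ei) /=; last first.
  by rewrite (bigD1 i) //= big1 ?eiE ?eqxx // => j /negbTE; rewrite eiE => ->.
rewrite [X in _ + X]big1 ?addr0; last first.
  by move=> m /andP[_ /negbTE mei]; rewrite ffunE mei mul0r.
rewrite ffunE eqxx mul1r (bigD1 i) //= big1 ?mulr1 ?eiE ?eqxx ?expr1 //.
by move=> j /negbTE ji; rewrite eiE ji expr0.
Qed.

Lemma is_hpolyM d e F G :
  is_hpoly d F -> is_hpoly e G -> is_hpoly (d + e) (fun x => F x * G x).
Proof.
move=> [c Fc] [c' Gc'].
pose addm (p : {ffun I -> 'I_d.+1} * {ffun I -> 'I_e.+1}) : {ffun I -> 'I_(d + e).+1} :=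
  [ffun i => inord (p.1 i + p.2 i)].
have addmE p i : (addm p i : nat) = (p.1 i + p.2 i)%N.
  by rewrite ffunE inordK // ltnS leq_add // -ltnS.
pose homog (p : {ffun I -> 'I_d.+1} * {ffun I -> 'I_e.+1}) :=
  ((\sum_i (p.1 i : nat))%N == d) && ((\sum_i (p.2 i : nat))%N == e).
exists [ffun m => \sum_(p | homog p && (addm p == m)) c p.1 * c' p.2] => x.
rewrite Fc Gc' /hpoly_eval big_distrl /=.
under eq_bigr => m _.
  rewrite big_distrr /=; under eq_bigr => m' _.
    rewrite mulrACA -big_split /=.
    under eq_bigr => i _ do rewrite -exprD -(addmE (m, m')).
    over.
  over.
rewrite pair_big (partition_big addm (fun m => (\sum_i (m i : nat))%N == d + e)).
  apply: eq_bigr => m _; rewrite ffunE big_distrl; apply: eq_bigr => -[m1 m2].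
  by case/andP=> _ /eqP <-.
move=> p /andP[/eqP pd /eqP pe].
by rewrite (eq_bigr _ (fun i _ => addmE p i)) big_split /= pd pe.
Qed.

Lemma is_hpoly_sum d (J : finType) (P : pred J) (F : J -> (I -> CC) -> CC) :
  (forall j, is_hpoly d (F j)) -> is_hpoly d (fun x => \sum_(j | P j) F j x).
Proof.
move=> hF; elim: (index_enum J) => [|j s IHs].
  by apply: is_hpoly_ext (is_hpoly0 d) => x; rewrite big_nil.
case Pj: (P j); last by apply: is_hpoly_ext IHs => x; rewrite big_cons Pj.
by apply: is_hpoly_ext (is_hpolyD (hF j) IHs) => x; rewrite big_cons Pj.
Qed.

Lemma is_hpoly_prod n e (F : 'I_n -> (I -> CC) -> CC) :
  (forall i, is_hpoly e (F i)) -> is_hpoly (n * e) (fun x => \prod_i F i x).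
Proof.
elim: n F => [|n IHn] F hF.
  by rewrite mul0n; apply: is_hpoly_ext (is_hpoly_cst 1) => x; rewrite big_ord0.
have := is_hpolyM (IHn _ (fun i => hF (widen_ord (leqnSn n) i))) (hF ord_max).
by rewrite -mulSnr; apply: is_hpoly_ext => x; rewrite big_ord_recr.
Qed.

Definition is_hpoly_mx d m n (A : (I -> CC) -> 'M[CC]_(m, n)) :=
  forall i j, is_hpoly d (fun x => A x i j).

Lemma is_hpoly_det n e (A : (I -> CC) -> 'M[CC]_n) :
  is_hpoly_mx e A -> is_hpoly (n * e) (fun x => \det (A x)).
Proof.
move=> hA; apply: is_hpoly_sum => s.
by apply: is_hpolyZ; apply: is_hpoly_prod => i; apply: hA.
Qed.

Lemma is_hpoly_mxB d m n (A B : (I -> CC) -> 'M[CC]_(m, n)) :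
  is_hpoly_mx d A -> is_hpoly_mx d B -> is_hpoly_mx d (fun x => A x - B x).
Proof.
by move=> hA hB i j; apply: is_hpoly_ext (is_hpolyB (hA i j) (hB i j)) => x; rewrite !mxE.
Qed.

Lemma is_hpoly_mxZ d e m n (a : (I -> CC) -> CC) (A : (I -> CC) -> 'M[CC]_(m, n)) :
  is_hpoly d a -> is_hpoly_mx e A -> is_hpoly_mx (d + e) (fun x => a x *: A x).
Proof.
by move=> ha hA i j; apply: is_hpoly_ext (is_hpolyM ha (hA i j)) => x; rewrite !mxE.
Qed.

Lemma is_hpoly_mulmx d e m n p (A : (I -> CC) -> 'M[CC]_(m, n))
    (B : (I -> CC) -> 'M[CC]_(n, p)) :
  is_hpoly_mx d A -> is_hpoly_mx e B -> is_hpoly_mx (d + e) (fun x => A x *m B x).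
Proof.
move=> hA hB i j; have := is_hpoly_sum predT (fun l => is_hpolyM (hA i l) (hB l j)).
by apply: is_hpoly_ext => x; rewrite mxE.
Qed.

Lemma is_hpoly_rowsub e m m' n (g : 'I_m' -> 'I_m) (A : (I -> CC) -> 'M[CC]_(m, n)) :
  is_hpoly_mx e A -> is_hpoly_mx e (fun x => rowsub g (A x)).
Proof. by move=> hA i j; apply: is_hpoly_ext (hA (g i) j) => x; rewrite mxE. Qed.

Lemma is_hpoly_adj n e (A : (I -> CC) -> 'M[CC]_n) :
  is_hpoly_mx e A -> is_hpoly_mx (n.-1 * e) (fun x => \adj (A x)).
Proof.
move=> hA i j; apply: is_hpoly_ext (is_hpolyZ _ (is_hpoly_det _)) => [x|].
  by rewrite !mxE.
by move=> a b; apply: is_hpoly_ext (hA _ _) => x; rewrite !mxE.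
Qed.

End HomogeneousPolynomials.

Section CramerCombinations.

Variables n0 n1 k : nat.
Notation N := (n0 * n1)%N.
Implicit Types (f : {ffun 'I_k -> 'I_N}) (a : 'I_k -> CC) (b : k.-tuple 'M[CC]_(n0, n1)).

Definition ffun_upd f (i : 'I_k) (c : 'I_N) : {ffun 'I_k -> 'I_N} :=
  [ffun j => if j == i then c else f j].

(* Expanding along column i, the Pluecker coordinate of b at f[i := c] is the c-th
   coordinate of row i of adj(B_f) B (B = stiefel b), a combination of the vectors of b. *)
Definition cramer_mx f a (x : {ffun 'I_k -> 'I_N} -> CC) : 'M[CC]_(n0, n1) :=
  vec_mx (\row_c \sum_i a i * x (ffun_upd f i c)).

Lemma det_colsub_ffun_upd b f i c :
  \det (colsub (ffun_upd f i c) (stiefel b)) =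
  \sum_l \adj (colsub f (stiefel b)) i l * stiefel b l c.
Proof.
rewrite (expand_det_col _ i); apply: eq_bigr => l _.
rewrite mulrC [\adj _ _ _]mxE !mxE ffunE eqxx; congr (_ * _).
rewrite /cofactor; congr (_ * \det _).
by apply/matrixP => l' j; rewrite !mxE ffunE eq_sym (negbTE (neq_lift _ _)).
Qed.

Lemma cramer_mx_pluecker b f a :
  cramer_mx f a (pluecker b) =
  \sum_i a i *: \sum_l \adj (colsub f (stiefel b)) i l *: tnth b l.
Proof.
apply: (can_inj mxvecK); rewrite vec_mxK; apply/rowP => c.
rewrite !mxE linear_sum summxE; apply: eq_bigr => i _.
rewrite ffunE det_colsub_ffun_upd linearZ mxE linear_sum summxE; congr (_ * _).
by apply: eq_bigr => l _; rewrite linearZ /= !mxE.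
Qed.

Lemma cramer_mx_pluecker_id b f a :
  colsub f (stiefel b) = 1%:M -> cramer_mx f a (pluecker b) = \sum_i a i *: tnth b i.
Proof.
move=> bf1; rewrite cramer_mx_pluecker bf1 adj1; apply: eq_bigr => i _; congr (_ *: _).
rewrite (bigD1 i) //= big1 ?addr0 ?mxE ?eqxx ?scale1r // => l /negbTE li.
by rewrite mxE eq_sym li scale0r.
Qed.

Lemma cramer_mx_in_span b f a : cramer_mx f a (pluecker b) \in <<b>>%VS.
Proof.
rewrite cramer_mx_pluecker; apply: memv_suml => i _; apply: memvZ.
by apply: memv_suml => l _; apply/memvZ/memv_span/mem_tnth.
Qed.

Lemma is_hpoly_cramer_mx f a : is_hpoly_mx 1 (cramer_mx f a).
Proof.
move=> i j; apply: is_hpoly_ext (is_hpoly_sum _ (fun l => is_hpolyZ (a l) (is_hpoly_coord _))).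
by move=> x; rewrite !mxE.
Qed.

End CramerCombinations.

Section NormalizedBases.

Variables n0 n1 k : nat.
Notation N := (n0 * n1)%N.
Variable f : {ffun 'I_k -> 'I_N}.
Hypothesis f_inj : injective f.

Definition mx_unit (c : 'I_N) : 'M[CC]_(n0, n1) := vec_mx (delta_mx 0 c).

Lemma mxvec_unit c c' : mxvec (mx_unit c) 0 c' = (c' == c)%:R.
Proof. by rewrite vec_mxK mxE. Qed.

Definition coordproj (M : 'M[CC]_(n0, n1)) : 'M[CC]_(n0, n1) :=
  \sum_j mxvec M 0 (f j) *: mx_unit (f j).

Lemma mxvec_coordproj M j : mxvec (coordproj M) 0 (f j) = mxvec M 0 (f j).
Proof.
rewrite linear_sum summxE (bigD1 j) //= big1 ?addr0 => [|l /negbTE lj].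
  by rewrite linearZ mxE mxvec_unit eqxx mulr1.
by rewrite linearZ mxE mxvec_unit (inj_eq f_inj) eq_sym lj mulr0.
Qed.

Lemma mxvec_sub_coordproj M j : mxvec (M - coordproj M) 0 (f j) = 0.
Proof. by rewrite linearB !mxE mxvec_coordproj subrr. Qed.

Lemma free_colsub_stiefel (b : k.-tuple 'M[CC]_(n0, n1)) :
  colsub f (stiefel b) = 1%:M -> free b.
Proof.
move=> bf1; apply/freeP => lam sum0 i.
have /rowP/(_ (f i)) := congr1 mxvec sum0; rewrite linear0 !mxE linear_sum summxE.
rewrite (bigD1 i) //= big1 ?addr0 => [|l /negbTE li].
  have /matrixP/(_ i i) := bf1; rewrite !mxE eqxx linearZ mxE (tnth_nth 0) => ->.
  by rewrite mulr1.
have /matrixP/(_ l i) := bf1; rewrite !mxE li linearZ mxE (tnth_nth 0) => ->.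
by rewrite mulr0.
Qed.

Variable r : nat.
Hypothesis r_le_k : (r <= k)%N.
Variable M : 'I_r -> 'M[CC]_(n0, n1).

Definition zero_extension (i : 'I_k) : 'M[CC]_(n0, n1) :=
  oapp M 0 (insub (val i) : option 'I_r).

Definition normal_basis : k.-tuple 'M[CC]_(n0, n1) :=
  [tuple zero_extension i - coordproj (zero_extension i) + mx_unit (f i) | i < k].

Lemma colsub_normal_basis : colsub f (stiefel normal_basis) = 1%:M.
Proof.
apply/matrixP => i j; rewrite !mxE tnth_mktuple linearD mxE mxvec_sub_coordproj.
by rewrite add0r mxvec_unit (inj_eq f_inj) eq_sym.
Qed.

Hypothesis M_diag :
  forall s t, mxvec (M s) 0 (f (widen_ord r_le_k t)) = (s == t)%:R.

Lemma normal_basis_span s :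
  M s = \sum_i mxvec (M s) 0 (f i) *: tnth normal_basis i.
Proof.
have termE i : mxvec (M s) 0 (f i) *: (zero_extension i - coordproj (zero_extension i)) =
               (i == widen_ord r_le_k s)%:R *: (M s - coordproj (M s)).
  rewrite /zero_extension; case: insubP => [t _ ti|ir] /=; last first.
    have -> : coordproj 0 = 0 by apply: big1 => j _; rewrite linear0 mxE scale0r.
    rewrite subr0 scaler0; case: eqP => [iw|]; last by rewrite scale0r.
    by move: ir; rewrite iw /= ltn_ord.
  have -> : i = widen_ord r_le_k t by apply: val_inj.
  have -> : (widen_ord r_le_k t == widen_ord r_le_k s) = (s == t) by rewrite eq_sym.
  by rewrite M_diag; case: eqP => [->|]; rewrite ?scale1r ?scale0r.
under eq_bigr => i _ do rewrite tnth_mktuple scalerDr termE.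
rewrite big_split /= (bigD1 (widen_ord r_le_k s)) //= big1 ?addr0 => [|i /negbTE ->].
  by rewrite eqxx scale1r subrK.
by rewrite scale0r.
Qed.

End NormalizedBases.

Lemma exists_inj_ext N k r (p : 'I_r -> 'I_N) (r_le_k : (r <= k)%N) :
  injective p -> (k <= N)%N ->
  exists f : {ffun 'I_k -> 'I_N}, injective f /\ forall t, f (widen_ord r_le_k t) = p t.
Proof.
move=> p_inj k_le_N.
pose s := codom p ++ [seq c <- enum 'I_N | c \notin codom p].
have s_uniq : uniq s.
  rewrite cat_uniq (map_inj_uniq p_inj) enum_uniq filter_uniq ?enum_uniq //= andbT.
  by apply/hasPn => c; rewrite mem_filter => /andP[].
have size_s : size s == N.
  rewrite -[N in _ == N](size_enum_ord N); apply/eqP/perm_size/uniq_perm => // [|c].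
    exact: enum_uniq.
  by rewrite mem_cat mem_filter !mem_enum; case: (c \in codom p).
pose st : N.-tuple 'I_N := Tuple size_s.
exists [ffun i => tnth st (widen_ord k_le_N i)]; split.
  have st_inj : injective (tnth st) by apply/tuple_uniqP.
  by move=> i j; rewrite !ffunE => /st_inj [] /val_inj.
move=> t; rewrite ffunE (tnth_nth (p t)) /= nth_cat size_codom card_ord ltn_ord.
by rewrite (nth_map t) ?size_enum_ord // nth_ord_enum.
Qed.

Definition has_dual_coords n0 n1 r (M : 'I_r -> 'M[CC]_(n0, n1)) :=
  exists p : 'I_r -> 'I_(n0 * n1), forall s t, mxvec (M s) 0 (p t) = (s == t)%:R.

Lemma exists_cramer_realization n0 n1 k r (M : 'I_r -> 'M[CC]_(n0, n1)) :
  (r <= k <= n0 * n1)%N -> has_dual_coords M ->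
  exists f (alpha : 'I_r -> 'I_k -> CC) (b : k.-tuple 'M[CC]_(n0, n1)),
    free b /\ forall s, cramer_mx f (alpha s) (pluecker b) = M s.
Proof.
case/andP=> r_le_k k_le_N [p M_p].
have p_inj : injective p.
  move=> s t pst; have := M_p s t; rewrite -pst M_p eqxx.
  by case: eqP => // _; rewrite mulr1n mulr0n => /eqP; rewrite oner_eq0.
have [f [f_inj f_p]] := exists_inj_ext r_le_k p_inj k_le_N.
have bf1 := colsub_normal_basis f_inj M.
exists f, (fun s i => mxvec (M s) 0 (f i)), (normal_basis f M).
split=> [|s]; first exact: free_colsub_stiefel bf1.
rewrite cramer_mx_pluecker_id //; symmetry; apply: normal_basis_span => s' t.
by rewrite f_p M_p.
Qed.

Lemma mulmx_eq0_det n p (S : 'M[CC]_n) (X : 'M[CC]_(n, p)) :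
  \det S != 0 -> S *m X = 0 -> X = 0.
Proof.
move=> detS SX; have S_unit : S \in unitmx by rewrite unitmxE unitfE.
by rewrite -(mulKmx S_unit X) SX mulmx0.
Qed.

Section SymmetricMaps.

Variables n0 m n2 : nat.
Variables top sh : 'I_m -> 'I_n0.
Variable E : {vspace 'M[CC]_(n0, m)}.
Variable q : 'Hom(subvs_of E, 'M[CC]_(m, n2)).
Hypothesis q_symm : Symm_phi q.

Lemma Symm_phi_eq0 a : \det (rowsub top (vsval a)) != 0 -> q a = 0 -> q = 0.
Proof.
move=> detA qa0; apply/lfunP => a'; rewrite zero_lfunE.
apply: mulmx_eq0_det detA _; rewrite mul_rowsub_mx q_symm qa0 mulmx0.
by apply/matrixP => i j; rewrite !mxE.
Qed.

Lemma Symm_phi_adj a b :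
  \adj (rowsub top (vsval a)) *m rowsub top (vsval b) *m q a =
  \det (rowsub top (vsval a)) *: q b.
Proof.
by rewrite -mulmxA mul_rowsub_mx -q_symm -mul_rowsub_mx mulmxA mul_adj_mx mul_scalar_mx.
Qed.

Lemma Symm_phi_eq0_kernel a (K : 'M[CC]_(n0, m)) :
  \det (rowsub top (vsval a)) != 0 -> \det (rowsub sh K) != 0 -> K *m q a = 0 -> q = 0.
Proof.
move=> detA detK Kqa0; apply: (Symm_phi_eq0 detA); apply: mulmx_eq0_det detK _.
by rewrite mul_rowsub_mx Kqa0; apply/matrixP => i j; rewrite !mxE.
Qed.

End SymmetricMaps.

Section SymmetryCertificates.

Variables n0 m : nat.
Variables top sh : 'I_m -> 'I_n0.
Implicit Types A B C : 'M[CC]_(n0, m).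

(* Clearing the denominator of q(B) = A_u^-1 B_u q(A) in A q(B) = B q(A), resp. in
   B q(C) = C q(B). *)
Definition kernel2 A B : 'M[CC]_(n0, m) :=
  A *m (\adj (rowsub top A) *m rowsub top B) - \det (rowsub top A) *: B.

Definition kernel3 A B C : 'M[CC]_(n0, m) :=
  B *m (\adj (rowsub top A) *m rowsub top C) - C *m (\adj (rowsub top A) *m rowsub top B).

Definition symm_cert2 (M : 'I_2 -> 'M[CC]_(n0, m)) : CC :=
  \det (rowsub top (M 0)) * \det (rowsub sh (kernel2 (M 0) (M 1))).

Definition symm_cert3 (M : 'I_3 -> 'M[CC]_(n0, m)) : CC :=
  \det (rowsub top (M 0)) * \det (rowsub sh (kernel3 (M 0) (M 1) (M 2%:R))).

Variables (n2 : nat) (E : {vspace 'M[CC]_(n0, m)}).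
Variable q : 'Hom(subvs_of E, 'M[CC]_(m, n2)).
Hypothesis q_symm : Symm_phi q.

Lemma kernel2_Symm_phi (a b : subvs_of E) : kernel2 (vsval a) (vsval b) *m q a = 0.
Proof.
rewrite mulmxBl -!mulmxA (mulmxA (\adj _)) (Symm_phi_adj _ q_symm).
by rewrite -scalemxAl -scalemxAr q_symm subrr.
Qed.

Lemma kernel3_Symm_phi (a b c : subvs_of E) :
  kernel3 (vsval a) (vsval b) (vsval c) *m q a = 0.
Proof.
rewrite mulmxBl -!mulmxA !(mulmxA (\adj _)) !(Symm_phi_adj _ q_symm).
by rewrite -!scalemxAr q_symm subrr.
Qed.

Lemma Symm_phi_eq0_cert2 (M : 'I_2 -> 'M[CC]_(n0, m)) :
  (forall s, M s \in E) -> symm_cert2 M != 0 -> q = 0.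
Proof.
move=> ME; rewrite mulf_eq0 negb_or => /andP[detA detK].
pose a : subvs_of E := Sub (M 0) (ME 0); pose b : subvs_of E := Sub (M 1) (ME 1).
exact: (Symm_phi_eq0_kernel (a := a) q_symm detA detK (kernel2_Symm_phi a b)).
Qed.

Lemma Symm_phi_eq0_cert3 (M : 'I_3 -> 'M[CC]_(n0, m)) :
  (forall s, M s \in E) -> symm_cert3 M != 0 -> q = 0.
Proof.
move=> ME; rewrite mulf_eq0 negb_or => /andP[detA detK].
pose a : subvs_of E := Sub (M 0) (ME 0); pose b : subvs_of E := Sub (M 1) (ME 1).
pose c : subvs_of E := Sub (M 2%:R) (ME 2%:R).
exact: (Symm_phi_eq0_kernel (a := a) q_symm detA detK (kernel3_Symm_phi a b c)).
Qed.

End SymmetryCertificates.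

Section CertificatesArePolynomial.

Variables n0 m k : nat.
Variables top sh : 'I_m -> 'I_n0.
Variable f : {ffun 'I_k -> 'I_(n0 * m)}.

Lemma is_hpoly_symm_cert2 (alpha : 'I_2 -> 'I_k -> CC) : (0 < m)%N ->
  exists d, is_hpoly d (fun x => symm_cert2 top sh (fun s => cramer_mx f (alpha s) x)).
Proof.
move=> m_gt0; have hM s := is_hpoly_cramer_mx f (alpha s).
have hA := is_hpoly_rowsub top (hM 0).
have hAB := is_hpoly_mulmx (hM 0)
  (is_hpoly_mulmx (is_hpoly_adj hA) (is_hpoly_rowsub top (hM 1))).
have hdB := is_hpoly_mxZ (is_hpoly_det hA) (hM 1).
rewrite (_ : m * 1 + 1 = 1 + (m.-1 * 1 + 1))%N in hdB; last first.
  by rewrite !muln1 !addn1 prednK // add1n.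
have hK := is_hpoly_rowsub sh (is_hpoly_mxB hAB hdB).
by eexists; apply: is_hpolyM (is_hpoly_det hA) (is_hpoly_det hK).
Qed.

Lemma is_hpoly_symm_cert3 (alpha : 'I_3 -> 'I_k -> CC) :
  exists d, is_hpoly d (fun x => symm_cert3 top sh (fun s => cramer_mx f (alpha s) x)).
Proof.
have hM s := is_hpoly_cramer_mx f (alpha s).
have hA := is_hpoly_rowsub top (hM 0).
have hBC s t := is_hpoly_mulmx (hM s)
  (is_hpoly_mulmx (is_hpoly_adj hA) (is_hpoly_rowsub top (hM t))).
have hK := is_hpoly_rowsub sh (is_hpoly_mxB (hBC 1 2%:R) (hBC 2%:R 1)).
by eexists; apply: is_hpolyM (is_hpoly_det hA) (is_hpoly_det hK).
Qed.

End CertificatesArePolynomial.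

Lemma generic_Symm_phi_eq0 n0 n1 n2 k r (cert : ('I_r -> 'M[CC]_(n0, n1)) -> CC)
    (M : 'I_r -> 'M[CC]_(n0, n1)) :
  (r <= k <= n0 * n1)%N -> has_dual_coords M -> cert M != 0 ->
  (forall f (alpha : 'I_r -> 'I_k -> CC),
     exists d, is_hpoly d (fun x => cert (fun s => cramer_mx f (alpha s) x))) ->
  (forall (E : {vspace 'M[CC]_(n0, n1)}) M', (forall s, M' s \in E) -> cert M' != 0 ->
     forall q : 'Hom(subvs_of E, 'M[CC]_(n1, n2)), Symm_phi q -> q = 0) ->
  exists U : {vspace 'M[CC]_(n0, n1)} -> Prop,
    [/\ zariski_open_Gr k U, exists E, U E &
        forall E, U E ->
          forall q : 'Hom(subvs_of E, 'M[CC]_(n1, n2)), Symm_phi q <-> q = 0].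
Proof.
move=> r_k_N M_p certM cert_poly cert_Symm.
have [f [alpha [b0 [b0_free b0_M]]]] := exists_cramer_realization r_k_N M_p.
have [d [c cE]] := cert_poly f alpha.
pose U E := \dim E = k /\
  exists b : k.-tuple 'M[CC]_(n0, n1), basis_of E b /\ hpoly_eval c (pluecker b) != 0.
exists U; split.
- split=> [E []//|]; exists unit, (fun => d), (fun => c) => E dimE.
  by split=> [[_ [b ?]]|[_ [b ?]]]; [exists tt, b | split=> //; exists b].
- exists <<b0>>%VS; split; first by rewrite (eqP b0_free) size_tuple.
  by exists b0; rewrite /basis_of eqxx b0_free -cE (functional_extensionality _ _ b0_M).
move=> E [_ [b [/andP[/eqP Eb _] cb]]] q; split=> [|->]; last first.
  by move=> a a'; rewrite !lfunE /= !mulmx0.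
apply: (cert_Symm E (fun s => cramer_mx f (alpha s) (pluecker b))); last by rewrite cE.
by move=> s; rewrite -Eb cramer_mx_in_span.
Qed.

Section Witnesses.

Variables n0 m : nat.
Hypothesis m_lt_n0 : (m < n0)%N.

Definition first_rows (i : 'I_m) : 'I_n0 := widen_ord (ltnW m_lt_n0) i.
Definition next_rows (i : 'I_m) : 'I_n0 := Ordinal (leq_ltn_trans (ltn_ord i) m_lt_n0).

Definition top_id_mx : 'M[CC]_(n0, m) := \matrix_(i, j) ((i : nat) == j)%:R.
Definition shift_id_mx : 'M[CC]_(n0, m) := \matrix_(i, j) ((i : nat) == j.+1)%:R.
Definition ramp_mx : 'M[CC]_(n0, m) :=
  \matrix_(i, j) if (i < m)%N then ((i : nat) == j)%:R * i%:R
                 else (((i : nat) == m) && ((j : nat) == 0%N))%:R.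

Lemma rowsub_first_top_id_mx : rowsub first_rows top_id_mx = 1%:M.
Proof. by apply/matrixP => i j; rewrite !mxE. Qed.

Definition witness3 (s : 'I_3) : 'M[CC]_(n0, m) :=
  if (s : nat) == 0%N then top_id_mx else if (s : nat) == 1%N then shift_id_mx else ramp_mx.

Lemma symm_cert3_witness : (1 < m)%N -> symm_cert3 first_rows next_rows witness3 != 0.
Proof.
move=> m_gt1.
have shift_ramp i j : (shift_id_mx *m rowsub first_rows ramp_mx) (next_rows i) j =
                      (i == j)%:R * (i : nat)%:R.
  rewrite mxE (bigD1 i) //= big1 ?addr0 => [|l /negbTE li]; rewrite !mxE /= ?ltn_ord.
    by rewrite eqxx mul1r.
  by rewrite eqSS eq_sym (li : ((l : nat) == i) = false) mul0r.
have ramp_shift i j : (ramp_mx *m rowsub first_rows shift_id_mx) (next_rows i) j =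
                      if (i.+1 < m)%N then (i == j)%:R * (i.+1)%:R else 0.
  rewrite mxE; case: ltnP => im; last first.
    apply: big1 => l _; rewrite !mxE /= ltnNge im /=.
    by case: l => -[|l] ? /=; rewrite ?andbF ?mul0r ?mulr0.
  rewrite (bigD1 (Ordinal im)) //= big1 ?addr0 => [|l /negbTE li]; rewrite !mxE /= im.
    by rewrite eqxx mul1r mulrC.
  by rewrite -val_eqE /= in li; rewrite eq_sym li mul0r mul0r.
pose d : 'rV[CC]_m := \row_i ((i : nat)%:R - (if (i.+1 < m)%N then (i.+1)%:R else 0)).
rewrite /symm_cert3 /kernel3 /witness3 /= rowsub_first_top_id_mx adj1 det1 mul1r !mul1mx.
have -> : rowsub next_rows (shift_id_mx *m rowsub first_rows ramp_mx -
                            ramp_mx *m rowsub first_rows shift_id_mx) = diag_mx d.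
  apply/matrixP => i j; rewrite mxE [in LHS]mxE [X in _ + X]mxE shift_ramp ramp_shift !mxE.
  case: eqVneq => [->|ij]; rewrite ?mulr1n ?mul1r //.
  by rewrite !mulr0n !mul0r if_same subrr.
rewrite det_diag; apply/prodf_neq0 => i _; rewrite mxE.
case: ifP => im; first by rewrite -natr1 opprD addrA subrr sub0r oppr_eq0 oner_eq0.
have <- : m.-1 = i.
  by apply/eqP; rewrite -eqSS prednK ?(ltnW m_gt1) // eqn_leq ltn_ord leqNgt im.
by rewrite subr0 pnatr_eq0 -subn1 subn_eq0 -ltnNge.
Qed.

End Witnesses.

Lemma witness3_dual_coords n0 m (m_lt_n0 : (m < n0)%N) : (1 < m)%N ->
  has_dual_coords (witness3 n0 m).
Proof.
move=> m_gt1; have m_gt0 := ltnW m_gt1.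
exists (fun t : 'I_3 => mxvec_index (if (t : nat) == 2 then Ordinal m_lt_n0
                             else widen_ord (leq_ltn_trans m_gt1 m_lt_n0) t)
                            (Ordinal m_gt0)) => s t.
rewrite mxvecE; case: s => -[|[|[|?]]] ? //; case: t => -[|[|[|?]]] ? //.
all: by rewrite /witness3 !mxE /= ?ltnn ?eqxx ?m_gt0 ?m_gt1 ?(gtn_eqF m_gt0)
  ?(gtn_eqF m_gt1) ?mul0r ?mulr0.
Qed.

Definition witness2 n0 (s : 'I_2) : 'M[CC]_(n0, 1) :=
  if (s : nat) == 0%N then top_id_mx n0 1 else shift_id_mx n0 1.

Lemma witness2_dual_coords n0 : (1 < n0)%N -> has_dual_coords (witness2 n0).
Proof.
move=> n0_gt1; exists (fun t => mxvec_index (widen_ord n0_gt1 t) ord0) => s t.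
by rewrite mxvecE; case: s => -[|[|?]] ? //; case: t => -[|[|?]] ? //; rewrite /witness2 !mxE.
Qed.

Lemma symm_cert2_witness n0 (n0_gt1 : (1 < n0)%N) :
  symm_cert2 (first_rows n0_gt1) (next_rows n0_gt1) (witness2 n0) = -1.
Proof.
rewrite /symm_cert2 /kernel2 /witness2 /= rowsub_first_top_id_mx adj1 det1 scale1r mul1r.
have -> : rowsub (first_rows n0_gt1) (shift_id_mx n0 1) = 0.
  by apply/matrixP => i j; rewrite !mxE; case: i => -[].
by rewrite !mulmx0 sub0r det_mx11 !mxE.
Qed.

Unset Implicit Arguments.

Theorem mainTheorem3 (n0 n1 n2 : nat) (hdim : (n1 < n0)%N) (hn1 : (1 <= n1)%N) :
  ((n1 = 1)%N ->
     forall k : nat, (2 <= k <= n0 * n1)%N ->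
       exists U : {vspace 'M[CC]_(n0, n1)} -> Prop,
         [/\ zariski_open_Gr k U, exists E, U E &
             forall E, U E ->
               forall q : 'Hom(subvs_of E, 'M[CC]_(n1, n2)),
                 Symm_phi q <-> q = 0]) /\
  ((1 < n1)%N ->
     forall k : nat, (3 <= k <= n0 * n1)%N ->
       exists U : {vspace 'M[CC]_(n0, n1)} -> Prop,
         [/\ zariski_open_Gr k U, exists E, U E &
             forall E, U E ->
               forall q : 'Hom(subvs_of E, 'M[CC]_(n1, n2)),
                 Symm_phi q <-> q = 0]).
Proof.
split=> [n1_eq1 k k_bounds | n1_gt1 k k_bounds].
- subst n1.
  apply: (generic_Symm_phi_eq0 (cert := symm_cert2 (first_rows hdim) (next_rows hdim))
            k_bounds (witness2_dual_coords hdim)).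
  + by rewrite symm_cert2_witness oppr_eq0 oner_eq0.
  + by move=> f alpha; apply: is_hpoly_symm_cert2.
  + move=> E M ME certM q q_symm; exact: (Symm_phi_eq0_cert2 q_symm ME certM).
- apply: (generic_Symm_phi_eq0 (cert := symm_cert3 (first_rows hdim) (next_rows hdim))
            k_bounds (witness3_dual_coords hdim n1_gt1)).
  + exact: symm_cert3_witness.
  + by move=> f alpha; apply: is_hpoly_symm_cert3.
  + move=> E M ME certM q q_symm; exact: (Symm_phi_eq0_cert3 q_symm ME certM).
Qed.
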